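(* Let $n\in\mathbb N$. The canonical $n$-tensors $L^n_\Omega$, restricted to $\mathcal P^{1/n}(\Omega)$ and to $\mathcal M^{1/n}(\Omega)$ respectively, form congruent families of $n$-tensors (of regularity $1/n$). Likewise, for every $0<r\le 1/n$, the canonical $n$-tensors $\tau^n_{\Omega;r}$ on $\mathcal P^r(\Omega)$ and on $\mathcal M^r(\Omega)$ respectively form congruent families of $n$-tensors of regularity $r$.
   Context: For a measurable space $\Omega$: $\mathcal S(\Omega)$ finite signed measures, $\mathcal M(\Omega)$ finite measures, $\mathcal P(\Omega)$ probability measures. For $r\in(0,1]$, $\mathcal S^r(\Omega)$ is the Banach lattice of $r$-th powers of finite signed measures, whose elements are $\phi\mu^r$ with $\mu\in\mathcal M(\Omega)$, $\phi\in L^{1/r}(\Omega,\mu)$ (with $\phi\mu^r=\psi\nu^r$ iff $\phi(d\mu/d\rho)^r=\psi(d\nu/d\rho)^r$ $\rho$-a.e. for a dominating $\rho$). $\mathcal M^r(\Omega)=\{\mu^r:\mu\in\mathcal M(\Omega)\}$, $\mathcal P^r(\Omega)=\{\mu^r:\mu\in\mathcal P(\Omega)\}$, with tangent spaces $T_{\mu^r}\mathcal M^r(\Omega)=\{\phi\mu^r:\phi\in L^{1/r}(\Omega,\mu)\}$ and $T_{\mu^r}\mathcal P^r(\Omega)=\{\phi\mu^r:\int\phi\,d\mu=0\}$. The canonical tensor $\tau^n_{\Omega;r}$ ($0<r\le1/n$) is $(\tau^n_{\Omega;r})_{\mu^r}(\phi_1\mu^r,\dots,\phi_n\mu^r)=r^{-n}\int_\Omega\phi_1\cdots\phi_n\,d\mu$,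 and $L^n_\Omega:=\tau^n_{\Omega;1/n}$, i.e. $L^n_\Omega(\phi_1\mu^{1/n},\dots,\phi_n\mu^{1/n})=n^n\int\phi_1\cdots\phi_n\,d\mu$. A Markov kernel $K:\Omega\to\mathcal P(\Omega')$ induces $K_*\mu(A')=\int K(\omega)(A')d\mu(\omega)$; it is congruent if there is a measurable $\kappa:\Omega'\to\Omega$ with $\kappa_*K(\omega)=\delta_\omega$ for all $\omega$. The formal derivative of $K_r(\mu^r)=(K_*\mu)^r$ at $\mu^r$ is $d_{\mu^r}K_r(\phi\mu^r)=\frac{d\{K_*(\phi\mu)\}}{d\mu'}\mu'^r$, $\mu'=K_*\mu$, and $(K_r^*\Psi)_{\mu^r}(V_1,\dots,V_n)=\Psi_{(K_*\mu)^r}(d_{\mu^r}K_rV_1,\dots,d_{\mu^r}K_rV_n)$. A family $(\Theta_\Omega)$ of $n$-tensor fields on $\mathcal M^r(\Omega)$ (or $\mathcal P^r(\Omega)$), one for each measurable space, is a congruent family of regularity $r$ if $K_r^*\Theta_{\Omega'}=\Theta_\Omega$ for every congruent Markov kernel $K:\Omega\to\mathcal P(\Omega')$. *)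

From HB Require Import structures.
From mathcomp Require Import all_boot all_order all_algebra.
From mathcomp Require Import all_classical all_reals all_analysis.

Set Implicit Arguments.
Unset Strict Implicit.
Unset Printing Implicit Defensive.
Import Order.TTheory GRing.Theory Num.Theory.
Import numFieldTopology.Exports.

Local Open Scope classical_set_scope.
Local Open Scope ring_scope.

Section push.
Context d d' (T : measurableType d) (T' : measurableType d') (R : realType).
Variables (mu : {measure set T -> \bar R}) (K : R.-pker T ~> T').

Definition push (A : set T') : \bar R := (\int[mu]_w K w A)%E.

Let push0 : push set0 = 0%E.
Proof.
by rewrite /push (eq_integral (cst 0%E)) ?integral0// => y _; rewrite measure0.
Qed.

Let push_ge0 A : (0 <= push A)%E.
Proof. exact: integral_ge0. Qed.

Let push_sigma_additive : semi_sigma_additive push.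
Proof.
move=> U mU tU mUU; rewrite [X in _ --> X](_ : _ =
  (\int[mu]_y (\sum_(n <oo) K y (U n)))%E); last first.
  apply: eq_integral => V _.
  by apply/esym/cvg_lim => //; exact/measure_semi_sigma_additive.
apply/cvg_closeP; split.
  by apply: is_cvg_nneseries => n _ _; exact: integral_ge0.
rewrite closeE// integral_nneseries// => n.
exact: measurable_kernel K _ (mU n).
Qed.

HB.instance Definition _ := isMeasure.Build _ _ R
  push push0 push_ge0 push_sigma_additive.

Definition pushm : {measure set T' -> \bar R} := push.

End push.

Definition congruent_kernel d d' (T : measurableType d)
    (T' : measurableType d') (R : realType) (K : R.-pker T ~> T') : Prop :=
  exists kappa : T' -> T, measurable_fun setT kappa /\
    forall (w : T) (A : set T), measurable A ->
      K w (kappa @^-1` A) = \d_w A.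

(* phi is in L^p(Omega, mu) (p = 1/r) *)
Definition inL d (T : measurableType d) (R : realType)
    (mu : {measure set T -> \bar R}) (p : R) (phi : T -> R) : Prop :=
  measurable_fun setT phi /\ finite_norm mu p%:E phi.

(* phi' is (a version of) the Radon-Nikodym derivative
   d{K_*(phi mu)} / d{K_* mu}, i.e. the coefficient function of the
   formal derivative  d_{mu^r} K_r (phi mu^r) = phi' (K_* mu)^r. *)
Definition push_density d d' (T : measurableType d) (T' : measurableType d')
    (R : realType) (mu : {measure set T -> \bar R}) (K : R.-pker T ~> T')
    (phi : T -> R) (phi' : T' -> R) : Prop :=
  measurable_fun setT phi' /\
  (pushm mu K).-integrable setT (EFin \o phi') /\
  forall A' : set T', measurable A' ->
    (\int[pushm mu K]_(y in A') (phi' y)%:E =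
     \int[mu]_w ((phi w)%:E * K w A'))%E.

(* An n-tensor field on M^r(Omega) for every measurable space Omega,
   written in the coordinates  (mu^r ; phi_1 mu^r, ..., phi_n mu^r)
   |->  Theta_{mu^r}(phi_1 mu^r, ..., phi_n mu^r). *)
Definition tensor_family (R : realType) (n : nat) :=
  forall d (T : measurableType d),
    {measure set T -> \bar R} -> ('I_n -> T -> R) -> R.

Definition tau (R : realType) (n : nat) (r : R) : tensor_family R n :=
  fun d T mu phi => r ^- n * Rintegral mu setT (fun x => \prod_(i < n) phi i x).

Definition Ln (R : realType) (n : nat) : tensor_family R n :=
  @tau R n (n%:R^-1).

Definition congruent_family_M (R : realType) (n : nat) (r : R)
    (Theta : tensor_family R n) : Prop :=
  forall d d' (T : measurableType d) (T' : measurableType d')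
    (K : R.-pker T ~> T'), congruent_kernel K ->
  forall (mu : {measure set T -> \bar R}), (mu setT < +oo)%E ->
  forall (phi : 'I_n -> T -> R) (phi' : 'I_n -> T' -> R),
    (forall i, inL mu r^-1 (phi i)) ->
    (forall i, push_density mu K (phi i) (phi' i)) ->
    Theta _ T' (pushm mu K) phi' = Theta _ T mu phi.

(* the same on P^r(Omega): mu a probability measure and tangent
   vectors phi mu^r with \int phi d mu = 0 *)
Definition congruent_family_P (R : realType) (n : nat) (r : R)
    (Theta : tensor_family R n) : Prop :=
  forall d d' (T : measurableType d) (T' : measurableType d')
    (K : R.-pker T ~> T'), congruent_kernel K ->
  forall (mu : {measure set T -> \bar R}), mu setT = 1%E ->
  forall (phi : 'I_n -> T -> R) (phi' : 'I_n -> T' -> R),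
    (forall i, inL mu r^-1 (phi i)) ->
    (forall i, (\int[mu]_x (phi i x)%:E)%E = 0%E) ->
    (forall i, push_density mu K (phi i) (phi' i)) ->
    Theta _ T' (pushm mu K) phi' = Theta _ T mu phi.

(* If K is congruent with retraction kappa, then K(w) is concentrated on
   kappa^-1(w), so integrating g o kappa against K(w) gives g(w), and
   integrating it against K_* mu gives the integral of g against mu.  Applied
   to the defining identity of the push densities phi'_i, this shows that
   phi'_i = phi_i o kappa holds (K_* mu)-a.e.; hence the integral of
   prod_i phi'_i against K_* mu is that of (prod_i phi_i) o kappa, i.e. the
   integral of prod_i phi_i against mu.  This holds for the extended
   integrals, so the bound r <= 1/n (which ensures integrability) is unused. *)

From HB Require Import structures.
From mathcomp Require Import all_boot all_order all_algebra.
From mathcomp Require Import all_classical all_reals all_analysis.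
From mathcomp Require Import measurable_realfun.
Set Implicit Arguments.
Unset Strict Implicit.
Unset Printing Implicit Defensive.
Import Order.TTheory GRing.Theory Num.Theory.
Local Open Scope classical_set_scope.
Local Open Scope ring_scope.
Local Open Scope ereal_scope.

(* [pushm mu K] is the composition [kcst mu \; ksnd K] evaluated at any
   point, so the library's [integral_kcomp] computes integrals against it.
   [kcst] takes the finiteness proof so that its finite-kernel instance can be
   inferred. *)
Section kcst.
Context d d' (X : measurableType d) (Y : measurableType d') (R : realType).
Variable mu : {measure set Y -> \bar R}.
Hypothesis mu_fin : mu [set: Y] < +oo.

Definition kcst of mu [set: Y] < +oo : X -> {measure set Y -> \bar R} :=
  fun=> mu.

Let measurable_kcst U :
  measurable U -> measurable_fun [set: X] (kcst mu_fin ^~ U).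
Proof. by move=> _; exact: (measurable_cst (mu U)). Qed.

HB.instance Definition _ :=
  isKernel.Build _ _ X Y R (kcst mu_fin) measurable_kcst.

Let kcst_uub : measure_fam_uub (kcst mu_fin).
Proof.
exists (fine (mu [set: Y]) + 1)%R => x.
by rewrite /kcst EFinD fineK ?lteDl ?ge0_fin_numE.
Qed.

HB.instance Definition _ :=
  Kernel_isFinite.Build _ _ X Y R (kcst mu_fin) kcst_uub.
End kcst.

Section ksnd.
Context d d' d'' (X : measurableType d) (Y : measurableType d')
  (Z : measurableType d'') (R : realType).
Variable k : R.-fker Y ~> Z.

Definition ksnd : X * Y -> {measure set Z -> \bar R} := k \o snd.

Let measurable_ksnd U :
  measurable U -> measurable_fun [set: X * Y] (ksnd ^~ U).
Proof. by move=> mU; apply: measurableT_comp (measurable_kernel k _ mU) _. Qed.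

HB.instance Definition _ := isKernel.Build _ _ _ Z R ksnd measurable_ksnd.

Let ksnd_uub : measure_fam_uub ksnd.
Proof. by have [r kr] := measure_uub k; exists r => -[]. Qed.

HB.instance Definition _ := Kernel_isFinite.Build _ _ _ Z R ksnd ksnd_uub.
End ksnd.

Lemma ge0_integral_pushm d d' (T : measurableType d) (T' : measurableType d')
    (R : realType) (mu : {measure set T -> \bar R}) (K : R.-pker T ~> T')
    (f : T' -> \bar R) : mu [set: T] < +oo ->
  (forall z, 0 <= f z) -> measurable_fun [set: T'] f ->
  \int[pushm mu K]_z f z = \int[mu]_w \int[K w]_z f z.
Proof.
move=> mu_fin f0 mf.
exact: (integral_kcomp (kcst (X:=unit) mu_fin) (ksnd (X:=unit) K) tt f0 mf).
Qed.

Section funepos_mul.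
Context (T : Type) (R : realDomainType) (g : T -> \bar R).
Hypothesis g0 : forall x, 0 <= g x.

Lemma ge0_funeposMr (f : T -> \bar R) :
  (fun x => f x * g x)^\+ = (fun x => f^\+ x * g x).
Proof.
apply/funext => x; rewrite !funeposE.
have [f0|f0] := leP 0 (f x); first by rewrite !max_l ?mule_ge0.
by rewrite !max_r ?mul0e ?(ltW f0)// mule_le0_ge0// ltW.
Qed.

Lemma ge0_funenegMr (f : T -> \bar R) :
  (fun x => f x * g x)^\- = (fun x => f^\- x * g x).
Proof.
rewrite -funeposN -funeposN -ge0_funeposMr.
by apply: congr1; apply/funext => x; rewrite /= mulNe.
Qed.
End funepos_mul.

Section congruent_kernel_retraction.
Context d d' (T : measurableType d) (T' : measurableType d') (R : realType).
Variables (K : R.-pker T ~> T') (kappa : T' -> T).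
Hypothesis mkappa : measurable_fun [set: T'] kappa.
Hypothesis kappaK : forall w A, measurable A -> K w (kappa @^-1` A) = \d_w A.

Lemma integral_kernel_comp (f : T -> \bar R) w E :
  measurable_fun [set: T] f -> measurable E ->
  \int[K w]_(y in E) f (kappa y) = f w * K w E.
Proof.
move=> mf mE; rewrite -integral_cst//; apply: ae_eq_integral => //.
  exact/measurable_funTS/measurableT_comp.
have mNfw : measurable (f @^-1` [set~ f w]).
  by rewrite -[X in measurable X]setTI; apply: mf => //; exact: measurableC.
exists (kappa @^-1` (f @^-1` [set~ f w])); split.
- by rewrite -[X in measurable X]setTI; exact: mkappa.
- by rewrite kappaK// diracE memNset//= => /(_ erefl).
- by move=> y /= /not_implyP[_ fy] fyw; apply: fy.
Qed.

Lemma ge0_integral_pushm_comp (mu : {measure set T -> \bar R})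
    (f : T -> \bar R) E : mu [set: T] < +oo ->
  (forall w, 0 <= f w) -> measurable_fun [set: T] f -> measurable E ->
  \int[pushm mu K]_(y in E) f (kappa y) = \int[mu]_w (f w * K w E).
Proof.
move=> mu_fin f0 mf mE; rewrite integral_mkcond ge0_integral_pushm//.
- by apply: eq_integral => w _; rewrite -integral_mkcond integral_kernel_comp.
- by move=> y; rewrite patchE; case: ifP.
- exact/(measurable_restrictT _ mE)/measurable_funTS/measurableT_comp.
Qed.

Lemma integral_pushm_comp (mu : {measure set T -> \bar R})
    (f : T -> \bar R) E : mu [set: T] < +oo ->
  measurable_fun [set: T] f -> measurable E ->
  \int[pushm mu K]_(y in E) f (kappa y) = \int[mu]_w (f w * K w E).
Proof.
move=> mu_fin mf mE.
rewrite integralE [RHS]integralE ge0_funeposMr// ge0_funenegMr//.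
rewrite -/(f \o kappa) funepos_comp funeneg_comp.
by rewrite !ge0_integral_pushm_comp//;
  [exact: measurable_funeneg|exact: measurable_funepos].
Qed.

Lemma push_density_ae_comp (mu : {measure set T -> \bar R}) phi phi' :
  mu [set: T] < +oo -> measurable_fun [set: T] phi ->
  push_density mu K phi phi' ->
  ae_eq (pushm mu K) [set: T'] (EFin \o phi') (EFin \o phi \o kappa).
Proof.
move=> mu_fin mphi [mphi' [iphi' densphi']].
apply: integral_ae_eq => //; first exact/measurable_EFinP/measurableT_comp.
move=> E _ mE; rewrite densphi'// integral_pushm_comp//.
exact/measurable_EFinP.
Qed.

Lemma Rintegral_pushm_prod n (mu : {measure set T -> \bar R})
    (phi : 'I_n -> T -> R) (phi' : 'I_n -> T' -> R) :
  mu [set: T] < +oo -> (forall i, measurable_fun [set: T] (phi i)) ->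
  (forall i, push_density mu K (phi i) (phi' i)) ->
  Rintegral (pushm mu K) [set: T'] (fun y => (\prod_(i < n) phi' i y)%R) =
  Rintegral mu [set: T] (fun w => (\prod_(i < n) phi i w)%R).
Proof.
move=> mu_fin mphi dens.
have mprod : measurable_fun [set: T] (fun w => (\prod_(i < n) phi i w)%R).
  by apply: measurable_prod => i _; exact: mphi.
have ae_prod : ae_eq (pushm mu K) [set: T']
    (EFin \o fun y => (\prod_(i < n) phi' i y)%R)
    (EFin \o (fun w => (\prod_(i < n) phi i w)%R) \o kappa).
  have : \forall y \ae pushm mu K, forall i, [set: T'] y ->
      (EFin \o phi' i) y = (EFin \o phi i \o kappa) y.
    by apply: filter_forall => i; exact: push_density_ae_comp.
  apply: filterS => y /= phi'E _; congr EFin; apply: eq_bigr => i _.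
  by case: (phi'E i I).
rewrite /Rintegral (ae_eq_integral _ _ _ _ _ ae_prod)//; last 2 first.
- by apply/measurable_EFinP/measurable_prod => i _; case: (dens i).
- by apply: measurableT_comp => //; exact/measurable_EFinP.
rewrite integral_pushm_comp//; last exact/measurable_EFinP.
by under eq_integral do rewrite prob_kernel mule1.
Qed.

End congruent_kernel_retraction.

Lemma tau_congruent_family_M (R : realType) n (r : R) :
  congruent_family_M r (@tau R n r).
Proof.
move=> d d' T T' K [kappa [mkappa kappaK]] mu mu_fin phi phi' Lphi dens.
by rewrite /tau (Rintegral_pushm_prod mkappa kappaK mu_fin _ dens)// => i;
  case: (Lphi i).
Qed.

Lemma congruent_family_M_P (R : realType) n (r : R)
    (Theta : tensor_family R n) :
  congruent_family_M r Theta -> congruent_family_P r Theta.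
Proof.
move=> congM d d' T T' K congK mu mu1 phi phi' Lphi _ dens.
by apply: congM => //; rewrite mu1 ltry.
Qed.

Local Open Scope ring_scope.

Theorem proposition3p6 (R : realType) (n : nat) : (0 < n)%N ->
  (@congruent_family_P R n (n%:R^-1) (@Ln R n) /\
   @congruent_family_M R n (n%:R^-1) (@Ln R n)) /\
  (forall r : R, 0 < r -> r <= n%:R^-1 ->
     @congruent_family_P R n r (@tau R n r) /\
     @congruent_family_M R n r (@tau R n r)).
Proof.
have tau_congruent (r : R) :
    congruent_family_P r (@tau R n r) /\ congruent_family_M r (@tau R n r).
  by split; [apply: congruent_family_M_P|]; exact: tau_congruent_family_M.
by move=> _; split; [exact: tau_congruent|move=> r _ _; exact: tau_congruent].
Qed.
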